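(* Let $\lambda$ and $\chi$ be infinite cardinals. Then there are functions $f_\eta$, for $\eta\in {}^\chi\lambda$, such that: (i) $\mathrm{Dom}(f_\eta)=\{\eta\restriction\alpha:\alpha<\chi\}$; (ii) $\mathrm{Rang}(f_\eta)\subseteq\lambda$; (iii) for every function $f:{}^{\chi>}\lambda\to\lambda$ there is $\eta\in{}^\chi\lambda$ with $f_\eta\subseteq f$.
   Context: ${}^\chi\lambda$ is the set of functions from $\chi$ to $\lambda$, and ${}^{\chi>}\lambda=\bigcup_{\alpha<\chi}{}^\alpha\lambda$ is the set of sequences of ordinals $<\lambda$ of length $<\chi$. For $\eta\in{}^\chi\lambda$ and $\alpha<\chi$, $\eta\restriction\alpha$ is the restriction of $\eta$ to $\alpha$. *)

(* Cardinals are represented as well-ordered types that are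
   initial ordinals: a type [T] with a strict well-order [lt] such that no
   proper initial segment [{b | lt b a}] admits an injection of [T]. *)

Definition is_cardinal (T : Type) (lt : T -> T -> Prop) : Prop :=
  well_founded lt /\
  (forall x, ~ lt x x) /\
  (forall x y z, lt x y -> lt y z -> lt x z) /\
  (forall x y, lt x y \/ x = y \/ lt y x) /\
  (forall a : T, ~ exists g : T -> {b : T | lt b a},
                     forall x y, g x = g y -> x = y).

Definition infinite (T : Type) : Prop :=
  exists g : nat -> T, forall m n, g m = g n -> m = n.

(* ^{chi>} lambda : sequences of elements of lam of length alpha < chi,
   a sequence of length alpha being a function on {beta | beta < alpha}. *)
Definition seqs (chi : Type) (ltc : chi -> chi -> Prop) (lam : Type) : Type :=
  {a : chi & {b : chi | ltc b a} -> lam}.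

Definition restr {chi : Type} {ltc : chi -> chi -> Prop} {lam : Type}
  (eta : chi -> lam) (a : chi) : seqs chi ltc lam :=
  existT _ a (fun b => eta (proj1_sig b)).

(* Let f_eta send eta |` alpha to eta(alpha).  Given f, define eta by
   well-founded recursion on chi as eta(alpha) := f (eta |` alpha); then
   f_eta agrees with f on its whole domain. *)

From Stdlib Require Import ClassicalEpsilon FunctionalExtensionality.

Section Restrictions.

Variables (chi : Type) (ltc : chi -> chi -> Prop) (lam : Type).

Definition restr_graph (eta : chi -> lam) (s : seqs chi ltc lam) : option lam :=
  if excluded_middle_informative (restr eta (projT1 s) = s)
  then Some (eta (projT1 s)) else None.

Lemma restr_graph_defined (eta : chi -> lam) (s : seqs chi ltc lam) :
  restr_graph eta s <> None <-> exists a : chi, s = restr eta a.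
Proof.
  unfold restr_graph; destruct excluded_middle_informative as [e | n]; split.
  - intros _; exists (projT1 s); auto.
  - discriminate.
  - intros H; contradiction H; reflexivity.
  - intros [a ->]; contradiction n; reflexivity.
Qed.

Lemma restr_graph_some (eta : chi -> lam) (s : seqs chi ltc lam) (v : lam) :
  restr_graph eta s = Some v -> s = restr eta (projT1 s) /\ v = eta (projT1 s).
Proof.
  unfold restr_graph; destruct excluded_middle_informative as [e | n].
  - intros H; injection H as <-; auto.
  - discriminate.
Qed.

Lemma exists_restr_fixpoint (wf : well_founded ltc) (f : seqs chi ltc lam -> lam) :
  exists eta : chi -> lam, forall a, eta a = f (restr eta a).
Proof.
  set (step := fun a (rec : forall b, ltc b a -> lam) =>
         f (existT _ a (fun b : {b | ltc b a} => rec (proj1_sig b) (proj2_sig b)))).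
  exists (Fix wf (fun _ => lam) step); intros a.
  rewrite Fix_eq; [reflexivity |].
  intros x r1 r2 Hr; unfold step; do 2 f_equal.
  apply functional_extensionality; intros [b hb]; apply Hr.
Qed.

End Restrictions.

Theorem fact1p5 (chi : Type) (ltc : chi -> chi -> Prop)
  (lam : Type) (ltl : lam -> lam -> Prop) :
  is_cardinal chi ltc -> infinite chi ->
  is_cardinal lam ltl -> infinite lam ->
  exists F : (chi -> lam) -> seqs chi ltc lam -> option lam,
    (* (i) Dom(f_eta) = { eta |` alpha : alpha < chi };
       (ii) Rang(f_eta) ⊆ lam holds by typing *)
    (forall (eta : chi -> lam) (s : seqs chi ltc lam),
        F eta s <> None <-> exists a : chi, s = restr eta a) /\
    (* (iii) every f : ^{chi>}lam -> lam extends some f_eta *)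
    (forall f : seqs chi ltc lam -> lam,
        exists eta : chi -> lam,
          forall (s : seqs chi ltc lam) (v : lam), F eta s = Some v -> f s = v).
Proof.
  intros [wf _] _ _ _.
  exists (restr_graph chi ltc lam); split.
  - apply restr_graph_defined.
  - intros f.
    destruct (exists_restr_fixpoint chi ltc lam wf f) as [eta Heta].
    exists eta; intros s v Hs.
    destruct (restr_graph_some chi ltc lam eta s v Hs) as [-> ->].
    symmetry; apply Heta.
Qed.
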